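(* Let $s,t\in\mathbb{R}$ with $s\ne0$, $s^2+4t>0$, and let $a,b,u\in\mathbb{C}$. The function $$y(x)=\sum_{n=0}^\infty(a\oplus b)^n_{1,u}\frac{x^n}{\{n\}_{s,t}!}$$ satisfies $y(0)=1$ and $(\mathbf{D}_{s,t}y)(x)=a\,y(x)+b\,y(ux)$ at every $x$ for which the series converges at $x$, $ux$, $\varphi_{s,t}x$ and $\varphi'_{s,t}x$.
   Context: $\varphi_{s,t}=\frac{s+\sqrt{s^2+4t}}{2}$, $\varphi'_{s,t}=\frac{s-\sqrt{s^2+4t}}{2}$. Generalized Fibonacci polynomials: $\{0\}_{s,t}=0$, $\{1\}_{s,t}=1$, $\{n+2\}_{s,t}=s\{n+1\}_{s,t}+t\{n\}_{s,t}$; Fibotorial $\{n\}_{s,t}!=\prod_{k=1}^n\{k\}_{s,t}$, $\{0\}_{s,t}!=1$. $(a\oplus b)^0_{1,u}=1$ and $(a\oplus b)^n_{1,u}=\prod_{i=0}^{n-1}(a+bu^i)$ for $n\ge1$. The $(s,t)$-derivative: $(\mathbf{D}_{s,t}f)(x)=\frac{f(\varphi_{s,t}x)-f(\varphi'_{s,t}x)}{(\varphi_{s,t}-\varphi'_{s,t})x}$ for $x\ne0$, $(\mathbf{D}_{s,t}f)(0)=f'(0)$. *)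

From Stdlib Require Import Reals ClassicalEpsilon.
From Coquelicot Require Import Coquelicot.
Open Scope R_scope.

(* phi_{s,t} and phi'_{s,t} (real, since s^2+4t>0 in the theorem) *)
Definition phi (s t : R) : R := (s + sqrt (s ^ 2 + 4 * t)) / 2.
Definition phi' (s t : R) : R := (s - sqrt (s ^ 2 + 4 * t)) / 2.

Fixpoint fibp (s t : R) (n : nat) : R :=
  match n with
  | O => 0
  | S m => match m with
           | O => 1
           | S k => s * fibp s t m + t * fibp s t k
           end
  end.

Fixpoint fibotorial (s t : R) (n : nat) : R :=
  match n with
  | O => 1
  | S m => fibotorial s t m * fibp s t (S m)
  end.

Fixpoint qpoch (a b u : C) (n : nat) : C :=
  match n with
  | O => (RtoC 1)
  | S m => (qpoch a b u m * (a + b * Cpow u m))%C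
  end.

Definition yterm (s t : R) (a b u x : C) (n : nat) : C :=
  (qpoch a b u n * Cpow x n / RtoC (fibotorial s t n))%C.

Definition yconv (s t : R) (a b u x : C) : Prop :=
  @ex_series C_AbsRing C_NormedModule (yterm s t a b u x).

(* y(x): the sum of the series where it converges (chosen by classical
   description; unspecified where it diverges) *)
Definition ysum (s t : R) (a b u x : C) : C :=
  epsilon (inhabits (RtoC 0))
    (fun l : C => @is_series C_AbsRing C_NormedModule (yterm s t a b u x) l).

Definition Dst_is (s t : R) (f : C -> C) (x d : C) : Prop :=
  (x <> (RtoC 0) /\
   d = ((f (RtoC (phi s t) * x) - f (RtoC (phi' s t) * x))
        / ((RtoC (phi s t) - RtoC (phi' s t)) * x))%C)
  \/ (x = (RtoC 0) /\ @is_derive C_AbsRing C_NormedModule f x d).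

From Stdlib Require Import Reals Lra Lia ClassicalEpsilon.
From Coquelicot Require Import Coquelicot.
Open Scope R_scope.

(* With phi + phi' = s and phi phi' = -t, Binet's formula
   {n} (phi - phi') = phi^n - phi'^n turns the difference of the (n+1)-st
   terms of y at phi x and phi' x into (phi - phi') x times the n-th terms
   of a y(x) + b y(ux) (the factor a + b u^n splits off the Pochhammer
   product and {n+1} cancels against the fibotorial); summing gives
   (D_{s,t} y)(x) = a y(x) + b y(ux) for x <> 0.  At x = 0, y is a power series
   converging on a disc, so comparing with a geometric series bounds
   y(z) - 1 - (a + b) z by O(|z|^2), which makes y complex-differentiable
   at 0 with derivative a + b.  The hypothesis s <> 0 keeps every {n} non-zero:
   phi^n = phi'^n would force phi' = -phi. *)

Lemma fibp_binet (s t p p' : R) : p + p' = s -> p * p' = - t ->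
  forall n, fibp s t n * (p - p') = p ^ n - p' ^ n.
Proof.
  intros Hsum Hprod.
  assert (Hpair : forall n, fibp s t n * (p - p') = p ^ n - p' ^ n /\
                            fibp s t (S n) * (p - p') = p ^ S n - p' ^ S n).
  { induction n as [|n [IHn IHSn]]; [simpl; split; ring|].
    split; [exact IHSn|].
    change (fibp s t (S (S n))) with (s * fibp s t (S n) + t * fibp s t n).
    transitivity (s * (fibp s t (S n) * (p - p')) + t * (fibp s t n * (p - p'))); [ring|].
    rewrite IHn, IHSn, <- Hsum.
    replace t with (- (p * p')) by lra.
    simpl; ring. }
  intros n; apply Hpair.
Qed.

Lemma phi_add_phi' (s t : R) : phi s t + phi' s t = s.
Proof. unfold phi, phi'; lra. Qed.

Lemma phi_mul_phi' (s t : R) : 0 <= s ^ 2 + 4 * t -> phi s t * phi' s t = - t.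
Proof. intros Hd. unfold phi, phi'. pose proof (sqrt_sqrt _ Hd). nra. Qed.

Lemma phi'_lt_phi (s t : R) : 0 < s ^ 2 + 4 * t -> phi' s t < phi s t.
Proof. intros Hd. unfold phi, phi'. pose proof (sqrt_lt_R0 _ Hd). lra. Qed.

Lemma Rabs_eq_of_pow_S_eq (x y : R) (n : nat) : x ^ S n = y ^ S n -> Rabs x = Rabs y.
Proof.
  intros E.
  destruct (Req_dec y 0) as [->|Hy].
  - rewrite pow_i in E by lia.
    destruct (Req_dec x 0) as [->|Hx]; [reflexivity|].
    exfalso; exact (pow_nonzero x (S n) Hx E).
  - assert (Hq : (x / y) ^ S n = 1).
    { unfold Rdiv. rewrite Rpow_mult_distr, pow_inv, E.
      apply Rinv_r, pow_nonzero, Hy. }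
    destruct (pow_R1 _ _ Hq) as [Habs|]; [|discriminate].
    rewrite Rabs_div in Habs by exact Hy.
    pose proof (Rabs_pos_lt _ Hy).
    rewrite <- (Rmult_1_l (Rabs y)), <- Habs. field. lra.
Qed.

Lemma fibp_S_neq0 (s t : R) (n : nat) :
  s <> 0 -> 0 < s ^ 2 + 4 * t -> fibp s t (S n) <> 0.
Proof.
  intros Hs Hd E.
  pose proof (fibp_binet s t _ _ (phi_add_phi' s t)
                (phi_mul_phi' s t (Rlt_le _ _ Hd)) (S n)) as Hbinet.
  rewrite E, Rmult_0_l in Hbinet.
  assert (Habs : Rabs (phi s t) = Rabs (phi' s t))
    by (apply (Rabs_eq_of_pow_S_eq _ _ n); lra).
  pose proof (phi'_lt_phi s t Hd). pose proof (phi_add_phi' s t).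
  revert Habs; unfold Rabs.
  destruct (Rcase_abs (phi s t)), (Rcase_abs (phi' s t)); lra.
Qed.

Lemma fibotorial_neq0 (s t : R) (n : nat) :
  s <> 0 -> 0 < s ^ 2 + 4 * t -> fibotorial s t n <> 0.
Proof.
  intros Hs Hd. induction n as [|n IH]; simpl; [lra|].
  apply Rmult_integral_contrapositive_currified; [exact IH|].
  apply fibp_S_neq0; assumption.
Qed.

Section NormedSeries.

Context {K : AbsRing} {V : NormedModule K}.

Lemma is_series_unique_lim (a : nat -> V) (l1 l2 : V) :
  is_series a l1 -> is_series a l2 -> l1 = l2.
Proof. apply filterlim_locally_unique. Qed.

Lemma is_series_tail (a : nat -> V) (l : V) :
  is_series a l -> is_series (fun k => a (S k)) (minus l (a O)).
Proof.
  intros H. apply is_series_incr_1.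
  unfold minus.
  rewrite <- plus_assoc, (plus_opp_l (G := NormedModule.AbelianGroup K V)), plus_zero_r.
  exact H.
Qed.

Lemma is_series_terms_bounded (a : nat -> V) (l : V) :
  is_series a l -> exists M, forall n, norm (a n) <= M.
Proof.
  intros H.
  destruct (filterlim_bounded (sum_n a)) as [M HM]; [exists l; exact H|].
  exists (2 * M). intros [|n].
  - pose proof (HM O) as H0. rewrite sum_O in H0.
    pose proof (norm_ge_0 (a O)). lra.
  - assert (E : a (S n) = minus (sum_n a (S n)) (sum_n a n)).
    { rewrite sum_Sn. unfold minus.
      rewrite (plus_comm (sum_n a n)), <- plus_assoc,
        (plus_opp_r (G := NormedModule.AbelianGroup K V)), plus_zero_r.
      reflexivity. }
    rewrite E. eapply Rle_trans; [apply norm_triangle|]. rewrite norm_opp.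
    pose proof (HM (S n)). pose proof (HM n). lra.
Qed.

Lemma norm_is_series_le (a : nat -> V) (b : nat -> R) (la : V) (lb : R) :
  is_series a la -> is_series b lb -> (forall n, norm (a n) <= b n) -> norm la <= lb.
Proof.
  intros Ha Hb Hab.
  assert (Hpartial : forall n, norm (sum_n a n) <= sum_n b n).
  { intros n. eapply Rle_trans; [apply norm_sum_n_m|]. apply sum_n_m_le, Hab. }
  assert (Hnorm : is_lim_seq (fun n => norm (sum_n a n)) (norm la)).
  { apply (filterlim_comp _ _ _ (sum_n a) norm _ (locally la)); [exact Ha|].
    apply filterlim_norm. }
  exact (is_lim_seq_le _ _ (norm la) lb Hpartial Hnorm Hb).
Qed.

End NormedSeries.

Lemma is_series_power_at_0 (c : nat -> C) : is_series (fun n => (c n * 0 ^ n)%C) (c O).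
Proof.
  apply (filterlim_ext (fun _ => c O)); [|apply filterlim_const].
  intros n; induction n as [|n IH].
  - rewrite sum_O. simpl. ring.
  - rewrite sum_Sn, <- IH. unfold plus. simpl. ring.
Qed.

Lemma power_series_remainder_le (c : nat -> C) (rho M : R) (z L : C) :
  0 < rho -> (forall n, Cmod (c n) * rho ^ n <= M) -> Cmod z <= rho / 2 ->
  is_series (fun n => (c n * z ^ n)%C) L ->
  Cmod (L - c O - c 1%nat * z)%C <= 2 * M / rho ^ 2 * Cmod z ^ 2.
Proof.
  intros Hrho HM Hz HL.
  set (q := Cmod z / rho).
  assert (Hzq : Cmod z = q * rho) by (unfold q; field; lra).
  assert (Hq : 0 <= q <= 1 / 2).
  { pose proof (Cmod_ge_0 z). split; apply (Rmult_le_reg_r rho); nra. }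
  assert (HM0 : 0 <= M).
  { pose proof (HM O). pose proof (Cmod_ge_0 (c O)). simpl in *. lra. }
  assert (Hterm : forall n, Cmod (c n * z ^ n) <= M * q ^ n).
  { intros n. rewrite Cmod_mult, Cmod_pow, Hzq, Rpow_mult_distr.
    pose proof (HM n). pose proof (pow_le q n (proj1 Hq)). nra. }
  pose proof (is_series_tail _ _ (is_series_tail _ _ HL)) as Htail.
  assert (Hgeom : is_series (fun k => M * q ^ 2 * q ^ k) (M * q ^ 2 * / (1 - q))).
  { apply (is_series_scal_l (M * q ^ 2) (fun k => q ^ k)).
    apply is_series_geom. rewrite Rabs_pos_eq; lra. }
  assert (Hle := norm_is_series_le _ _ _ _ Htail Hgeom).
  assert (Hrem : Cmod (L - c O - c 1%nat * z)%C <= M * q ^ 2 * / (1 - q)).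
  { replace (L - c O - c 1%nat * z)%C
      with (minus (minus L (c O * z ^ 0)) (c 1%nat * z ^ 1))%C.
    - apply Hle. intros k. eapply Rle_trans; [apply Hterm|]. simpl.
      apply Req_le; ring.
    - unfold minus, plus, opp. simpl. ring. }
  eapply Rle_trans; [exact Hrem|].
  rewrite Hzq.
  replace (2 * M / rho ^ 2 * (q * rho) ^ 2) with (2 * (M * q ^ 2)) by (field; lra).
  apply (Rmult_le_reg_r (1 - q)); [lra|].
  replace (M * q ^ 2 * / (1 - q) * (1 - q)) with (M * q ^ 2) by (field; lra).
  assert (0 <= M * q ^ 2) by (apply Rmult_le_pos; [exact HM0|apply pow2_ge_0]).
  nra.
Qed.

Lemma is_derive_of_quadratic_remainder (f : C -> C) (x d : C) (rho K : R) :
  0 < rho ->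
  (forall z, Cmod (z - x) < rho ->
             Cmod (f z - f x - (z - x) * d)%C <= K * Cmod (z - x) ^ 2) ->
  is_derive f x d.
Proof.
  intros Hrho Hrem.
  split; [apply is_linear_scal_l|].
  (* [is_derive] on [C] lives in [AbsRing_NormedModule C_AbsRing], which
     unification does not identify with [C_NormedModule]. *)
  intros x0 Hx0.
  apply (@is_filter_lim_locally_unique _ (AbsRing_NormedModule C_AbsRing)) in Hx0.
  subst x0.
  intros eps.
  assert (Hdelta : 0 < Rmin rho (eps / (Rabs K + 1))).
  { apply Rmin_pos; [exact Hrho|].
    apply Rdiv_lt_0_compat; [apply cond_pos|pose proof (Rabs_pos K); lra]. }
  apply (filter_imp (ball_norm x (mkposreal _ Hdelta)));
    [|exact (@locally_ball_norm _ (AbsRing_NormedModule C_AbsRing) x _)].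
  intros z Hz. unfold ball_norm in Hz. simpl in Hz.
  change (Cmod (f z - f x - (z - x) * d)%C <= eps * Cmod (z - x)%C).
  change (Cmod (z - x)%C < Rmin rho (eps / (Rabs K + 1))) in Hz.
  pose proof (Rmin_l rho (eps / (Rabs K + 1))).
  pose proof (Rmin_r rho (eps / (Rabs K + 1))).
  pose proof (Cmod_ge_0 (z - x)%C). pose proof (Rabs_pos K). pose proof (Rle_abs K).
  assert (Hsmall : (Rabs K + 1) * Cmod (z - x)%C <= eps).
  { replace (pos eps) with ((Rabs K + 1) * (eps / (Rabs K + 1))) by (field; lra).
    apply Rmult_le_compat_l; lra. }
  eapply Rle_trans; [apply Hrem; lra|]. simpl. nra.
Qed.

Lemma is_derive_power_series_0 (c : nat -> C) (f : C -> C) (r : R) : 0 < r ->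
  (forall z, Cmod z < r -> is_series (fun n => (c n * z ^ n)%C) (f z)) ->
  is_derive f (RtoC 0) (c 1%nat).
Proof.
  intros Hr Hf.
  set (rho := r / 2).
  assert (Hrho : Cmod rho < r) by (rewrite Cmod_R, Rabs_pos_eq; unfold rho; lra).
  destruct (is_series_terms_bounded _ _ (Hf _ Hrho)) as [M HM].
  assert (Hcoef : forall n, Cmod (c n) * rho ^ n <= M).
  { intros n. specialize (HM n). change (Cmod (c n * rho ^ n)%C <= M) in HM.
    rewrite Cmod_mult, Cmod_pow, Cmod_R, Rabs_pos_eq in HM; unfold rho in *; lra. }
  assert (Hf0 : f 0 = c O).
  { apply (is_series_unique_lim (fun n => (c n * 0 ^ n)%C)); [|apply is_series_power_at_0].
    apply Hf. rewrite Cmod_0. exact Hr. }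
  apply (is_derive_of_quadratic_remainder f (RtoC 0) (c 1%nat) (rho / 2) (2 * M / rho ^ 2)).
  { unfold rho; lra. }
  intros z Hz. replace (z - 0)%C with z in * by ring. rewrite Hf0, Cmult_comm.
  apply power_series_remainder_le; [unfold rho; lra|exact Hcoef|lra|].
  apply Hf. unfold rho in *; lra.
Qed.

Lemma RtoC_neq0 (r : R) : r <> 0 -> RtoC r <> RtoC 0.
Proof. intros Hr E. apply Hr. injection E; auto. Qed.

Section YSeries.

Variables (s t : R) (a b u : C).

Definition ycoef (n : nat) : C := (qpoch a b u n / RtoC (fibotorial s t n))%C.

Lemma yterm_ycoef (x : C) (n : nat) : yterm s t a b u x n = (ycoef n * x ^ n)%C.
Proof. unfold yterm, ycoef, Cdiv. ring. Qed.

Lemma yterm_0 (x : C) : yterm s t a b u x O = RtoC 1.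
Proof. unfold yterm. simpl. field. Qed.

Lemma ysum_eq (x l : C) : is_series (yterm s t a b u x) l -> ysum s t a b u x = l.
Proof.
  intros H. apply (is_series_unique_lim (yterm s t a b u x)); [|exact H].
  unfold ysum. apply epsilon_spec. exists l; exact H.
Qed.

Lemma ysum_is_series (x : C) :
  yconv s t a b u x -> is_series (yterm s t a b u x) (ysum s t a b u x).
Proof. intros [l H]. rewrite (ysum_eq _ _ H). exact H. Qed.

Lemma ysum_0 : ysum s t a b u (RtoC 0) = RtoC 1.
Proof.
  apply ysum_eq.
  apply (is_series_ext (fun n => (ycoef n * 0 ^ n)%C)).
  { intros n. symmetry. apply yterm_ycoef. }
  replace (RtoC 1) with (ycoef O) by (unfold ycoef; simpl; field).
  apply is_series_power_at_0.
Qed.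

Lemma is_derive_ysum_0 (r : R) : 0 < r ->
  (forall z, Cmod z < r -> yconv s t a b u z) ->
  is_derive (ysum s t a b u) (RtoC 0) (a + b)%C.
Proof.
  intros Hr Hconv.
  replace (a + b)%C with (ycoef 1%nat) by (unfold ycoef; simpl; rewrite Rmult_1_l; field).
  apply (is_derive_power_series_0 _ _ r Hr).
  intros z Hz. apply (is_series_ext (yterm s t a b u z)); [apply yterm_ycoef|].
  apply ysum_is_series, Hconv, Hz.
Qed.

Lemma yterm_phi_sub_phi' (x : C) (n : nat) :
  s <> 0 -> 0 < s ^ 2 + 4 * t ->
  (yterm s t a b u (RtoC (phi s t) * x) (S n) - yterm s t a b u (RtoC (phi' s t) * x) (S n)
   = RtoC (phi s t - phi' s t) * x *
     (a * yterm s t a b u x n + b * yterm s t a b u (u * x) n))%C.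
Proof.
  intros Hs Hd.
  pose proof (fibp_binet s t _ _ (phi_add_phi' s t)
                (phi_mul_phi' s t (Rlt_le _ _ Hd)) (S n)) as Hbinet.
  pose proof (fibotorial_neq0 s t n Hs Hd).
  pose proof (fibp_S_neq0 s t n Hs Hd).
  unfold yterm.
  change (qpoch a b u (S n)) with (qpoch a b u n * (a + b * Cpow u n))%C.
  change (fibotorial s t (S n)) with (fibotorial s t n * fibp s t (S n)).
  rewrite !Cpow_mult_l, <- !RtoC_pow.
  replace (phi s t ^ S n)
    with (phi' s t ^ S n + fibp s t (S n) * (phi s t - phi' s t)) by lra.
  rewrite RtoC_plus, !RtoC_mult, RtoC_minus, Cpow_S.
  field. split; apply RtoC_neq0; assumption.
Qed.

Lemma ysum_phi_sub_phi' (x : C) :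
  s <> 0 -> 0 < s ^ 2 + 4 * t ->
  yconv s t a b u x -> yconv s t a b u (u * x)%C ->
  yconv s t a b u (RtoC (phi s t) * x)%C -> yconv s t a b u (RtoC (phi' s t) * x)%C ->
  (ysum s t a b u (RtoC (phi s t) * x) - ysum s t a b u (RtoC (phi' s t) * x)
   = RtoC (phi s t - phi' s t) * x *
     (a * ysum s t a b u x + b * ysum s t a b u (u * x)))%C.
Proof.
  intros Hs Hd Hx Hux Hphi Hphi'.
  set (A := ysum s t a b u (RtoC (phi s t) * x)).
  set (B := ysum s t a b u (RtoC (phi' s t) * x)).
  assert (Hdiff : is_series (fun k => yterm s t a b u (RtoC (phi s t) * x) (S k)
                                    - yterm s t a b u (RtoC (phi' s t) * x) (S k))%C
                            (A - B)%C).
  { pose proof (is_series_minus _ _ _ _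
                  (is_series_tail _ _ (ysum_is_series _ Hphi))
                  (is_series_tail _ _ (ysum_is_series _ Hphi'))) as H.
    rewrite !yterm_0 in H. unfold minus, plus, opp in H. simpl in H.
    replace (A - B)%C with (A + - RtoC 1 + - (B + - RtoC 1))%C by ring.
    exact H. }
  pose proof (is_series_scal_l (RtoC (phi s t - phi' s t) * x)%C _ _
                (is_series_plus _ _ _ _
                   (is_series_scal_l a _ _ (ysum_is_series _ Hx))
                   (is_series_scal_l b _ _ (ysum_is_series _ Hux)))) as Hrhs.
  apply (is_series_unique_lim _ _ _ Hdiff).
  exact (is_series_ext _ _ _ (fun k => eq_sym (yterm_phi_sub_phi' x k Hs Hd)) Hrhs).
Qed.

End YSeries.

Theorem mainTheorem13 (s t : R) (a b u : C) :
  s <> 0 -> s ^ 2 + 4 * t > 0 ->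
  ysum s t a b u (RtoC 0) = (RtoC 1) /\
  (forall x : C,
     yconv s t a b u x ->
     yconv s t a b u (u * x)%C ->
     yconv s t a b u (RtoC (phi s t) * x)%C ->
     yconv s t a b u (RtoC (phi' s t) * x)%C ->
     (* at x = 0 the derivative y'(0) is only meaningful if y is defined
        near 0: require convergence on a neighbourhood of 0 *)
     (x = (RtoC 0) -> exists r : R, r > 0 /\
                  forall z : C, Cmod z < r -> yconv s t a b u z) ->
     Dst_is s t (ysum s t a b u) x
       (a * ysum s t a b u x + b * ysum s t a b u (u * x))%C).
Proof.
  intros Hs Hd. split; [apply ysum_0|].
  intros x Hx Hux Hphi Hphi' Hnear0.
  destruct (Ceq_dec x (RtoC 0)) as [->|Hx0].
  - right. split; [reflexivity|].
    destruct (Hnear0 eq_refl) as [r [Hr Hconv]].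
    rewrite Cmult_0_r, ysum_0, !Cmult_1_r.
    exact (is_derive_ysum_0 s t a b u r Hr Hconv).
  - left. split; [exact Hx0|].
    rewrite (ysum_phi_sub_phi' s t a b u x Hs Hd Hx Hux Hphi Hphi'), <- RtoC_minus.
    field. split; [exact Hx0|].
    apply RtoC_neq0. pose proof (phi'_lt_phi s t Hd). lra.
Qed.
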